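(* Take the special vertex $v=0$. Let $I,J$ be $m$-subsets of $\{1,\dots,n\}$ such that $J\setminus I=J'\sqcup J''$ with $J'<(I\setminus J)<J''$. Then $\kappa(M_I,M_J)=|J'|$ and $\kappa(M_J,M_I)=|J''|$.
   Context: Fix integers $1\le m<n$. Let $Q$ be the quiver with vertex set $\mathbb{Z}_n$ and arrows $x_a\colon a-1\to a$, $y_a\colon a\to a-1$ for $a\in\{1,\dots,n\}$. Let $A$ be the quotient of $\widehat{\mathbb{C}Q}$ by the relations $xy=yx$ and $x^m=y^{n-m}$ at every vertex; centre $Z=\mathbb{C}[[t]]$, $t=xy$; $e_j$ the idempotent at vertex $j$. $\operatorname{CM}(A)$ is the category of finitely generated $A$-modules free over $Z$. For an $m$-subset $I\subseteq\{1,\dots,n\}$, $M_I\in\operatorname{CM}(A)$ is the module with $e_jM_I=Z$ for all $j$, where $x_a$ acts by $1$ if $a\in I$ and by $t$ if $a\notin I$, and $y_a$ acts by $t$ if $a\in I$ and by $1$ if $a\notin I$. For $M,N\in\operatorname{CM}(A)$, $K_v(M,N)$ is the cokernel of the injective restriction map $\operatorname{Hom}_A(M,N)\to\operatorname{Hom}_Z(e_vM,e_vN)$ and $\kappa(M,N)=\dim_{\mathbb{C}}K_v(M,N)$. For sets $X,Y$ of integers, $X<Y$ means $x<y$ for all $x\in X,y\in Y$. *)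

From HB Require Import structures.
From mathcomp Require Import all_boot all_order all_algebra.
Set Implicit Arguments. Unset Strict Implicit. Unset Printing Implicit Defensive.
Import GRing.Theory.
Local Open Scope ring_scope.

(* Z = F[[t]] modelled as coefficient sequences; power series ring structure
   is only needed through multiplication by 1 or t (the arrow actions). *)
Definition series (F : fieldType) := nat -> F.

Definition tmul (F : fieldType) (s : series F) : series F :=
  fun k => if k is k'.+1 then s k' else 0.

Definition act (F : fieldType) (b : bool) (s : series F) : series F :=
  if b then s else tmul s.

(* Arrows are labelled a = 1..n, using a : 'I_n.+1 with 0 < a.
   x_a : (a-1) -> (a mod n), y_a : (a mod n) -> (a-1).
   On M_I: x_a acts by 1 if a \in I else t; y_a acts by t if a \in I else 1.
   A family g (g j \in Z = Hom_Z(e_j M_I, e_j M_J), identified with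
   multiplication by g j) is an A-module hom M_I -> M_J iff it commutes
   with all arrows (checking on the generator 1 of each e_j M_I). *)
Definition is_hom (F : fieldType) (n : nat) (I J : {set 'I_n.+1})
  (g : nat -> series F) : Prop :=
  forall a : 'I_n.+1, (0 < a)%N ->
    act (a \in I) (g (a %% n)%N) = act (a \in J) (g a.-1)
 /\ act (a \notin I) (g a.-1) = act (a \notin J) (g (a %% n)%N).

(* image of the restriction map Hom_A(M_I,M_J) -> Hom_Z(e_v M_I, e_v M_J) = Z *)
Definition hom_image (F : fieldType) (n : nat) (I J : {set 'I_n.+1}) (v : nat)
  : series F -> Prop :=
  fun s => exists g, is_hom I J g /\ g v = s.

Definition lincomb (F : fieldType) (k : nat) (c : 'I_k -> F)
  (b : 'I_k -> series F) : series F :=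
  fun e => \sum_(i < k) c i * b i e.

Definition ssub (F : fieldType) (s u : series F) : series F := fun e => s e - u e.

(* dim_F (Z / V) = k : there are k elements whose classes form a basis of Z/V *)
Definition codim_eq (F : fieldType) (V : series F -> Prop) (k : nat) : Prop :=
  exists b : 'I_k -> series F,
    (forall s, exists c : 'I_k -> F, V (ssub s (lincomb c b)))
 /\ (forall c : 'I_k -> F, V (lincomb c b) -> forall i, c i = 0).

(* kappa(M_I, M_J) = k, with kappa = dim K_v(M_I,M_J) *)
Definition kappa_eq (F : fieldType) (n : nat) (I J : {set 'I_n.+1}) (v k : nat)
  : Prop := codim_eq (hom_image (F:=F) I J v) k.

Definition set_lt (n : nat) (X Y : {set 'I_n.+1}) : Prop :=
  forall x y, x \in X -> y \in Y -> (x < y)%N.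

Definition msubset (n m : nat) (I : {set 'I_n.+1}) : Prop :=
  I \subset [set i : 'I_n.+1 | (0 < i)%N] /\ #|I| = m.

From HB Require Import structures.
From mathcomp Require Import all_boot all_order all_algebra.
From mathcomp Require Import zify.
From Stdlib Require Import FunctionalExtensionality.
Set Implicit Arguments. Unset Strict Implicit. Unset Printing Implicit Defensive.
Import GRing.Theory.

(* Put D1 = X \ Y and D2 = Y \ X and let c_D(a) count the
   elements of D that are <= a.  Walking around the cycle from vertex 0,
   each arrow a in D1 (resp. D2) forces one extra factor t on the source
   (resp. target) side, so a homomorphism g : M_X -> M_Y satisfies
   t^{c_D2(a)} g_a = t^{c_D1(a)} g_0 at every vertex a < n.  Conversely any
   series g_0 divisible by t^k, with k the maximal "excess"
   c_D2(a) - c_D1(a) over the vertices a <= n, extends to a homomorphism.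
   Hence the image of the restriction map at vertex 0 is t^k Z, and
   kappa(M_X, M_Y) = k (lemma kappa_is_max_excess).  The theorem then reduces to the
   combinatorics of prefix counts: if D2 = J' + J'' with J' < D1 < J'', the
   excess of (I, J) peaks at |J'| just before min D1, and that of (J, I)
   peaks at |J''| at max D1. *)

Definition tpow (F : fieldType) (k : nat) (s : series F) : series F :=
  iter k (@tmul F) s.

Lemma tpowE (F : fieldType) k (s : series F) e :
  tpow k s e = if e < k then 0%R else s (e - k).
Proof.
elim: k e => [|k IH] e; first by rewrite /tpow /= subn0.
by rewrite /tpow iterS -/(tpow k s) /tmul; case: e.
Qed.

Lemma tpowS (F : fieldType) k (s : series F) : tpow k.+1 s = tmul (tpow k s).
Proof. by []. Qed.

Lemma tpow_tmul (F : fieldType) k (s : series F) :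
  tpow k (tmul s) = tmul (tpow k s).
Proof. by rewrite /tpow -iterSr. Qed.

Definition cnt n (A : {set 'I_n.+1}) (a : nat) : nat :=
  #|[set x in A | (x <= a)%N]|.

Definition pos_set n (A : {set 'I_n.+1}) : Prop :=
  forall x : 'I_n.+1, x \in A -> 0 < x.

Lemma cnt_le n (A : {set 'I_n.+1}) a : cnt A a <= #|A|.
Proof. by apply: subset_leq_card; apply/subsetP => x; rewrite inE => /andP[]. Qed.

Lemma cnt_none n (A : {set 'I_n.+1}) a :
  (forall x, x \in A -> a < x) -> cnt A a = 0.
Proof.
move=> hA; rewrite /cnt (_ : [set x in A | x <= a] = set0) ?cards0 //.
by apply/setP => x; rewrite !inE; apply/negbTE/andP => -[/hA]; lia.
Qed.

Lemma cnt_all n (A : {set 'I_n.+1}) a :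
  (forall x, x \in A -> x <= a) -> cnt A a = #|A|.
Proof.
move=> hA; rewrite /cnt (_ : [set x in A | x <= a] = A) //.
apply/setP => x; rewrite inE.
by case hx: (x \in A) => //=; exact: hA.
Qed.

Lemma cnt0 n (A : {set 'I_n.+1}) : pos_set A -> cnt A 0 = 0.
Proof. by move=> hA; apply: cnt_none. Qed.

Lemma cntn n (A : {set 'I_n.+1}) : cnt A n = #|A|.
Proof. by apply: cnt_all => x _; rewrite -ltnS. Qed.

Lemma cntU n (A B : {set 'I_n.+1}) a :
  [disjoint A & B] -> cnt (A :|: B) a = cnt A a + cnt B a.
Proof.
move=> hAB; rewrite /cnt -cardsUI.
have -> : [set x in A :|: B | x <= a] = [set x in A | x <= a] :|: [set x in B | x <= a].
  by apply/setP => x; rewrite !inE andb_orl.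
suff -> : [set x in A | x <= a] :&: [set x in B | x <= a] = set0 by rewrite cards0 addn0.
apply/setP => x; rewrite !inE; apply/negbTE/negP => /and3P[/andP[hA _] hB _].
by rewrite (disjointFr hAB hA) in hB.
Qed.

Lemma cnt_step n (A : {set 'I_n.+1}) (a : nat) : 0 < a -> a <= n ->
  cnt A a = cnt A a.-1 + ((inord a : 'I_n.+1) \in A).
Proof.
move=> ha han; set o : 'I_n.+1 := inord a.
have ho : (o : nat) = a by rewrite inordK.
have split_a : [set x in A | x <= a] =
    [set x in A | x == o] :|: [set x in A | x <= a.-1].
  apply/setP => x; rewrite !inE -val_eqE /= ho -andb_orr.
  by congr (_ && _); apply/idP/idP => [|/orP[/eqP ->|]]; lia.
rewrite /cnt split_a cardsU.
have -> : [set x in A | x == o] :&: [set x in A | x <= a.-1] = set0.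
  by apply/setP => x; rewrite !inE -val_eqE /= ho; apply/negbTE; lia.
rewrite cards0 subn0 addnC; congr (_ + _).
case hoA: (o \in A).
  rewrite (_ : [set x in A | x == o] = [set o]) ?cards1 //.
  by apply/setP => x; rewrite !inE; case: eqP => [->|_]; rewrite ?hoA ?andbT ?andbF.
rewrite (_ : [set x in A | x == o] = set0) ?cards0 //.
by apply/setP => x; rewrite !inE; case: eqP => [->|_]; rewrite ?hoA ?andbT ?andbF.
Qed.

Section HomImage.
Variables (F : fieldType) (n : nat) (X Y : {set 'I_n.+1}).
Hypotheses (pX : pos_set X) (pY : pos_set Y).

Let pD1 : pos_set (X :\: Y).
Proof. by move=> x; rewrite inE => /andP[_ /pX]. Qed.

Let pD2 : pos_set (Y :\: X).
Proof. by move=> x; rewrite inE => /andP[_ /pY]. Qed.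

(* How many more factors t the target side has picked up by vertex a. *)
Definition excess (a : nat) : nat := cnt (Y :\: X) a - cnt (X :\: Y) a.

Lemma hom_transport (g : nat -> series F) : is_hom X Y g -> forall a, a < n ->
  tpow (cnt (Y :\: X) a) (g a) = tpow (cnt (X :\: Y) a) (g 0).
Proof.
move=> hg; elim=> [_|a IH ha]; first by rewrite !cnt0.
set o : 'I_n.+1 := inord a.+1.
have ho : (o : nat) = a.+1 by rewrite inordK //; lia.
have o_pos : 0 < o by rewrite ho.
have [h1 h2] := hg o o_pos.
rewrite ho modn_small // /act in h1 h2.
have s1 := @cnt_step n (X :\: Y) a.+1 isT (ltnW ha).
have s2 := @cnt_step n (Y :\: X) a.+1 isT (ltnW ha).
rewrite -/o !inE /= in s1 s2; rewrite s1 s2; have IHa := IH (ltnW ha).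
case hx: (o \in X); case hy: (o \in Y); rewrite hx hy /= in h1 h2 *.
- by rewrite !addn0 h1.
- by rewrite addn0 addn1 h1 tpow_tmul IHa.
- by rewrite addn0 addn1 tpowS -tpow_tmul h1.
- by rewrite !addn0 -h2.
Qed.

(* A series vanishing below the maximal excess k extends to a homomorphism:
   at vertex a use the shift by k + c_D1(a) - c_D2(a) >= 0. *)
Lemma hom_extend (k : nat) (s : series F) :
  #|X :\: Y| = #|Y :\: X| -> (forall a, a <= n -> excess a <= k) ->
  (forall e, e < k -> s e = 0%R) -> hom_image X Y 0 s.
Proof.
move=> hc hb hs; pose shift a := k + cnt (X :\: Y) a - cnt (Y :\: X) a.
exists (fun a => tpow (shift a) (fun e => s (e + k))); split; last first.
  rewrite /shift !cnt0 // addn0 subn0; apply: functional_extensionality => e.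
  by rewrite tpowE; case: ltnP => h; [rewrite hs | rewrite subnK].
move=> o ho; have hon : (o : nat) <= n by rewrite -ltnS.
have -> : shift (o %% n) = shift o.
  case: (ltnP o n) => h; first by rewrite modn_small.
  have -> : (o : nat) = n by lia.
  by rewrite modnn /shift !cnt0 // !cntn hc; lia.
have s1 := @cnt_step n (X :\: Y) o ho hon.
have s2 := @cnt_step n (Y :\: X) o ho hon.
rewrite inord_val !inE in s1 s2.
have b1 := hb o hon; have b0 := hb o.-1 (leq_trans (leq_pred _) hon).
rewrite /excess in b0 b1; rewrite /shift /act.
case hx: (o \in X); case hy: (o \in Y); rewrite hx hy /= in s1 s2 *.
all: by split; rewrite -?tpowS; congr (tpow _ _); lia.
Qed.

(* Conversely, an excess of k at some vertex a forces g_0 into t^k Z.  At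
   a = n the excess vanishes, as D1 and D2 have the same size. *)
Lemma hom_image_vanishes (k a : nat) (s : series F) :
  #|X :\: Y| = #|Y :\: X| -> a <= n -> k <= excess a ->
  hom_image X Y 0 s -> forall e, e < k -> s e = 0%R.
Proof.
move=> hc ha hk [g [hg <-]] e he.
have a_lt_n : a < n.
  rewrite ltn_neqAle ha andbT; apply/eqP => a_n.
  by move: hk; rewrite a_n /excess !cntn hc subnn; lia.
have := congr1 (fun f => f (e + cnt (X :\: Y) a)) (hom_transport hg a_lt_n).
have below : e + cnt (X :\: Y) a < cnt (Y :\: X) a by rewrite /excess in hk; lia.
by rewrite !tpowE below ltnNge leq_addl addnK.
Qed.

End HomImage.

Definition monomial (F : fieldType) (k : nat) (i : 'I_k) : series F :=
  fun e => if e == val i then 1%R else 0%R.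

Lemma lincomb_monomial (F : fieldType) k (c : 'I_k -> F) (i : 'I_k) :
  lincomb c (@monomial F k) i = c i.
Proof.
rewrite /lincomb (bigD1 i) //= /monomial eqxx mulr1 big1 ?addr0 // => j hj.
by rewrite val_eqE eq_sym (negbTE hj) mulr0.
Qed.

Lemma codim_vanishing (F : fieldType) (V : series F -> Prop) k :
  (forall s, V s <-> forall e, e < k -> s e = 0%R) -> codim_eq V k.
Proof.
move=> hV; exists (@monomial F k).
split=> [s|c /hV hc i].
  exists (fun i => s (val i)); apply/hV => e he.
  by rewrite /ssub (lincomb_monomial _ (Ordinal he)) subrr.
by rewrite -lincomb_monomial hc.
Qed.

Lemma kappa_is_max_excess (F : fieldType) n (X Y : {set 'I_n.+1}) k :
  pos_set X -> pos_set Y -> #|X :\: Y| = #|Y :\: X| ->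
  (exists2 a, a <= n & k <= excess X Y a) ->
  (forall a, a <= n -> excess X Y a <= k) ->
  kappa_eq F X Y 0 k.
Proof.
move=> pX pY hc [a ha hk] hb; apply: codim_vanishing => s; split.
  exact: hom_image_vanishes hk.
exact: hom_extend.
Qed.

Section SplitExcess.
Variables (n : nat) (I J J' J'' : {set 'I_n.+1}).
Hypotheses (hc : #|I :\: J| = #|J :\: I|)
  (hsplit : J :\: I = J' :|: J'') (hdis : [disjoint J' & J''])
  (hlt1 : set_lt J' (I :\: J)) (hlt2 : set_lt (I :\: J) J'').

Let D1 := I :\: J.

Lemma card_D1 : #|D1| = #|J'| + #|J''|.
Proof. by rewrite /D1 hc hsplit cardsU (disjoint_setI0 hdis) cards0 subn0. Qed.

Lemma cnt_D2 a : cnt (J :\: I) a = cnt J' a + cnt J'' a.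
Proof. by rewrite hsplit cntU. Qed.

(* D1 and D2 have the same size, so D1 is inhabited as soon as J' or J'' is. *)
Lemma D1_nonempty (K : {set 'I_n.+1}) (y : 'I_n.+1) :
  K \subset J' :|: J'' -> y \in K -> exists x, x \in D1.
Proof.
move=> hK hy; apply/card_gt0P; rewrite /D1 hc hsplit.
by apply/card_gt0P; exists y; exact: subsetP hK y hy.
Qed.

(* Once some element of J'' is passed, all of D1 is counted. *)
Lemma excess_IJ_bound a : excess I J a <= #|J'|.
Proof.
rewrite /excess cnt_D2 -/D1.
have := cnt_le J' a; have := cnt_le J'' a.
case: (boolP [exists y in J'', (y : nat) <= a]).
  case/existsP => y /andP[hy hya].
  rewrite (@cnt_all _ D1) ?card_D1 => [|x hx]; first lia.
  by have := hlt2 hx hy; lia.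
move=> hno; rewrite (@cnt_none _ J'') => [|y hy]; first lia.
by rewrite ltnNge; apply: contra hno => hya; apply/existsP; exists y; rewrite hy.
Qed.

(* Just before min D1 all of J' and nothing of D1 has been counted. *)
Lemma excess_IJ_attained : exists2 a, a <= n & #|J'| <= excess I J a.
Proof.
have [->|/set0Pn[y hy]] := eqVneq J' set0; first by exists 0; rewrite ?cards0.
have [x0 hx0] := D1_nonempty (subsetUl J' J'') hy.
case: (arg_minnP (fun i : 'I_n.+1 => val i) hx0) => x hx hmin.
have hyx := hlt1 hy hx; have hxn : (x : nat) <= n by rewrite -ltnS.
exists x.-1; first lia.
rewrite /excess cnt_D2 (@cnt_none _ D1) => [|z hz]; last by have /= := hmin z hz; lia.
rewrite (@cnt_all _ J') => [|z hz]; last by have := hlt1 hz hx; lia.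
lia.
Qed.

(* Once some element of D1 is passed, all of J' is counted. *)
Lemma excess_JI_bound a : excess J I a <= #|J''|.
Proof.
rewrite /excess cnt_D2 -/D1; have := cnt_le D1 a.
case: (boolP [exists x in D1, (x : nat) <= a]).
  case/existsP => x /andP[hx hxa].
  rewrite (@cnt_all _ J') ?card_D1 => [|z hz]; first lia.
  by have := hlt1 hz hx; lia.
move=> hno; rewrite (@cnt_none _ D1) => [|x hx]; first lia.
by rewrite ltnNge; apply: contra hno => hxa; apply/existsP; exists x; rewrite hx.
Qed.

(* At max D1 all of D1 and nothing of J'' has been counted. *)
Lemma excess_JI_attained : exists2 a, a <= n & #|J''| <= excess J I a.
Proof.
have [->|/set0Pn[y hy]] := eqVneq J'' set0; first by exists 0; rewrite ?cards0.
have [x0 hx0] := D1_nonempty (subsetUr J' J'') hy.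
case: (arg_maxnP (fun i : 'I_n.+1 => val i) hx0) => x hx hmax.
have hxy := hlt2 hx hy; have hyn : (y : nat) <= n by rewrite -ltnS.
exists x; first lia.
have := cnt_le J' x; rewrite /excess cnt_D2 (@cnt_all _ D1) ?card_D1 //.
by rewrite (@cnt_none _ J'') => [|z hz]; [lia | exact: hlt2 hx hz].
Qed.

End SplitExcess.

Theorem lemma6p4 (F : fieldType) (n m : nat) (I J J' J'' : {set 'I_n.+1}) :
  (1 <= m)%N -> (m < n)%N ->
  msubset m I -> msubset m J ->
  J :\: I = J' :|: J'' -> [disjoint J' & J''] ->
  set_lt J' (I :\: J) -> set_lt (I :\: J) J'' ->
  kappa_eq F I J 0 #|J'| /\ kappa_eq F J I 0 #|J''|.
Proof.
move=> _ _ [sI cI] [sJ cJ] hsplit hdis hlt1 hlt2.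
have pI : pos_set I by move=> x /(subsetP sI); rewrite inE.
have pJ : pos_set J by move=> x /(subsetP sJ); rewrite inE.
have hc : #|I :\: J| = #|J :\: I| by rewrite !cardsD setIC cI cJ.
split.
- apply: (kappa_is_max_excess F pI pJ hc).
  + exact: excess_IJ_attained hc hsplit hdis hlt1.
  + by move=> a _; exact: excess_IJ_bound hc hsplit hdis hlt2 a.
- apply: (kappa_is_max_excess F pJ pI (esym hc)).
  + exact: excess_JI_attained hc hsplit hdis hlt2.
  + by move=> a _; exact: excess_JI_bound hc hsplit hdis hlt1 a.
Qed.
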